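(* For every integer $m\ge1$, the polynomials $G_m(t,\beta)$ satisfy: (i) for all $\beta\in\mathbb{R}$ and $t\neq0$, $t^{m-1}G_m\!\left(\frac1t,1-\beta\right)=G_m(t,\beta)$; (ii) for all $\beta>0$, $G_m(0,\beta)>0$ if $m$ is even and $G_m(0,\beta)<0$ if $m$ is odd; (iii) for all $0<\beta<\frac12$, $G_m(-1,\beta)<0$ if $m\equiv1,2\pmod 4$ and $G_m(-1,\beta)>0$ if $m\equiv0,3\pmod4$; (iv) for all $\frac12<\beta<1$, $G_m(-1,\beta)<0$ if $m\equiv0,1\pmod4$ and $G_m(-1,\beta)>0$ if $m\equiv2,3\pmod4$.
   Context: $G_1(t,\beta)=-1$ and for $m\ge2$, $G_m(t,\beta)=[\beta(t-1)-(m-1)t]G_{m-1}(t,\beta)+t(t-1)\frac{\partial}{\partial t}G_{m-1}(t,\beta)$. *)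

From HB Require Import structures.
From mathcomp Require Import all_boot all_order all_algebra.
Set Implicit Arguments. Unset Strict Implicit. Unset Printing Implicit Defensive.
Import Order.TTheory GRing.Theory Num.Theory.
Local Open Scope ring_scope.

(* For fixed beta, G_m(., beta) is a polynomial in t.  Gaux beta n = G_{n+1}(t, beta).
   G_1 = -1,  G_m = [beta (t-1) - (m-1) t] G_{m-1} + t (t-1) d/dt G_{m-1}. *)
Fixpoint Gaux (R : comRingType) (beta : R) (n : nat) : {poly R} :=
  match n with
  | 0 => -1
  | n'.+1 =>
      (beta%:P * ('X - 1) - (n'.+1)%:R *: 'X) * Gaux beta n'
      + 'X * ('X - 1) * (Gaux beta n')^`()
  end.

(* G beta m = G_m(t, beta) as a polynomial in t (meaningful for m >= 1). *)
Definition G (R : comRingType) (beta : R) (m : nat) : {poly R} := Gaux beta m.-1.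

From HB Require Import structures.
From mathcomp Require Import all_boot all_order all_algebra.
From mathcomp Require Import ring zify.
Import Order.TTheory GRing.Theory Num.Theory.

(* Part (i) is a symmetry of coefficients: the recursion for the coefficients
   of G_m(., beta) is carried into itself by k |-> m - 1 - k, beta |-> 1 - beta.
   Part (ii) is the constant term -(-beta)^(m-1).  For (iii) and (iv) let
   a_n(beta) = G_(n+1)(-1, beta).  Differentiating the recursion in beta gives
   d/dbeta G_(n+1) = n (t - 1) G_n, hence a_(n+1)' = -2 (n+1) a_n, while (i) at
   t = -1 gives a_n(1 - beta) = (-1)^n a_n(beta); so a_n(1/2) = 0 for odd n,
   and a_n(0) = 0 for even n > 0 because G_m(t, 0) = t G_m(t, 1).  Integrating
   once at a time from these zeros, with u = beta (1 - beta),
     a_(2k) = (-1)^(k+1) P_k(u),   a_(2k+1) = (-1)^k (2 beta - 1) Q_k(u),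
   where P_k, Q_k are nonzero with nonnegative coefficients.  As u > 0 on
   (0, 1), the signs of a_n there are those of the prefactors. *)

Set Implicit Arguments.
Unset Strict Implicit.
Unset Printing Implicit Defensive.
Local Open Scope ring_scope.

Section Coefficients.
Variable R : comNzRingType.
Implicit Types (b c : R) (q : {poly R}).

Definition G_step b c q : {poly R} :=
  (b%:P * ('X - 1) - c *: 'X) * q + 'X * ('X - 1) * q^`().

Lemma GauxS b n : Gaux b n.+1 = G_step b n.+1%:R (Gaux b n).
Proof. by []. Qed.

Lemma G_step_expand b c q : G_step b c q =
  b%:P * ('X * q) - b%:P * q - c%:P * ('X * q) + 'X * ('X * q^`()) - 'X * q^`().
Proof. rewrite /G_step -mul_polyC; ring. Qed.

Lemma coef0_G_step b c q : (G_step b c q)`_0 = - b * q`_0.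
Proof. by rewrite G_step_expand !(coefD, coefN, coefCM, coefXM) /=; ring. Qed.

Lemma coefS_G_step b c q k :
  (G_step b c q)`_k.+1 = (b + k%:R - c) * q`_k - (b + k.+1%:R) * q`_k.+1.
Proof.
rewrite G_step_expand !(coefD, coefN, coefCM, coefXM) /= !coef_deriv.
by case: k => [|k] /=; rewrite ?mulr0n ?mulr1n; ring.
Qed.

Lemma G_stepMn b c q k : G_step b c (q *+ k) = G_step b c q *+ k.
Proof. by rewrite /G_step derivMn !mulrnAr mulrnDl. Qed.

Lemma G_step_mulXsub1 b c q :
  G_step b (c + 1) (('X - 1) * q) = ('X - 1) * G_step b c q.
Proof. by rewrite /G_step derivM derivXsubC -polyC1 -!mul_polyC; ring. Qed.

Lemma size_G_step b c q : (size (G_step b c q) <= (size q).+1)%N.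
Proof.
apply/leq_sizeP => -[|k] // le_q_k.
by rewrite coefS_G_step !nth_default ?mulr0 ?subr0 // leqW.
Qed.

Lemma size_Gaux b n : (size (Gaux b n) <= n.+1)%N.
Proof.
elim: n => [|n IH]; first by rewrite /= size_polyN size_poly1.
by rewrite GauxS (leq_trans (size_G_step _ _ _)).
Qed.

Lemma coef_Gaux_rev b n k :
  (k <= n)%N -> (Gaux b n)`_k = (Gaux (1 - b) n)`_(n - k).
Proof.
elim: n k => [|n IH]; first by case.
have top0 b' : (Gaux b' n)`_n.+1 = 0 by rewrite nth_default ?size_Gaux.
case=> [_|k le_k_n]; rewrite !GauxS.
  by rewrite subn0 coef0_G_step coefS_G_step top0 IH // subn0; ring.
rewrite subSS coefS_G_step.
have [->|ne_k_n] := eqVneq k n.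
  by rewrite subnn coef0_G_step top0 IH // subnn; ring.
rewrite !IH; [|lia|lia].
have [i ->] : exists i, n = (k + i.+1)%N by exists (n - k.+1)%N; lia.
have -> : (k + i.+1 - k = i.+1)%N by lia.
have -> : (k + i.+1 - k.+1 = i)%N by lia.
by rewrite coefS_G_step -!addnS natrD; ring.
Qed.
End Coefficients.

Lemma Gaux_reciprocal (F : fieldType) (b t : F) n : t != 0 ->
  t ^+ n * (Gaux (1 - b) n).[t^-1] = (Gaux b n).[t].
Proof.
move=> t_neq0.
rewrite !(horner_coef_wide _ (size_Gaux _ _)) mulr_sumr (reindex_inj rev_ord_inj).
apply: eq_bigr => -[i /=]; rewrite ltnS => le_i_n _.
rewrite subSS coef_Gaux_rev ?leq_subr // subKn // opprB addrC subrK exprVn mulrCA.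
by rewrite -[in t ^+ n](subnK le_i_n) exprD mulrAC divff ?mul1r // expf_neq0.
Qed.

Lemma horner0_Gaux (R : comNzRingType) (b : R) n : (Gaux b n).[0] = - (- b) ^+ n.
Proof.
rewrite horner_coef0; elim: n => [|n IH]; first by rewrite coefN coefC expr0.
by rewrite GauxS coef0_G_step IH exprS; ring.
Qed.

Section BetaDerivative.
Variable R : comNzRingType.
Implicit Types p q : {poly {poly R}}.

(* The derivative in the coefficient variable, which is beta in [Gaux 'X n]. *)
Definition pderiv p := map_poly (@deriv R) p.

HB.instance Definition _ := GRing.Additive.copy pderiv (map_poly (@deriv R)).

Lemma pderivB : {morph pderiv : p q / p - q}. Proof. exact: raddfB. Qed.
Lemma pderivD : {morph pderiv : p q / p + q}. Proof. exact: raddfD. Qed.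
Lemma pderivN : {morph pderiv : p / - p}. Proof. exact: raddfN. Qed.

Lemma pderivM p q : pderiv (p * q) = pderiv p * q + p * pderiv q.
Proof.
apply/polyP => i; rewrite coefD !coef_map /= !coefM raddf_sum -big_split /=.
by apply: eq_bigr => j _; rewrite derivM !coef_map.
Qed.

Lemma pderivC (c : {poly R}) : pderiv c%:P = c^`()%:P.
Proof. exact: map_polyC. Qed.

Lemma pderiv1 : pderiv 1 = 0.
Proof. by rewrite -polyC1 pderivC -polyC1 derivC. Qed.

Lemma pderivX : pderiv 'X = 0.
Proof.
apply/polyP => i; rewrite coef_map /= coefX coef0.
by case: (i == 1)%N; rewrite ?deriv0 // derivC.
Qed.

Lemma pderiv_deriv p : pderiv p^`() = (pderiv p)^`().
Proof. by apply/polyP => i; rewrite coef_deriv !coef_map /= coef_deriv derivMn. Qed.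

Lemma horner_pderivC p (c : R) : (pderiv p).[c%:P] = (p.[c%:P])^`().
Proof.
rewrite (horner_coef_wide _ (size_poly _ _)) horner_coef raddf_sum /=.
by apply: eq_bigr => i _; rewrite coef_map /= -polyC_exp [in RHS]mulrC deriv_mulC mulrC.
Qed.

Lemma pderivCM (c : {poly R}) p : pderiv (c%:P * p) = c^`()%:P * p + c%:P * pderiv p.
Proof. by rewrite pderivM pderivC. Qed.

Lemma pderivXM p : pderiv ('X * p) = 'X * pderiv p.
Proof. by rewrite pderivM pderivX mul0r add0r. Qed.

Lemma pderiv_G_step n q :
  pderiv (G_step 'X n%:R q) = ('X - 1) * q + G_step 'X n%:R (pderiv q).
Proof.
rewrite !G_step_expand !(pderivB, pderivD, pderivCM, pderivXM) pderiv_deriv.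
by rewrite derivX -polyC_natr derivC polyC1; ring.
Qed.

Lemma pderiv_Gaux n : pderiv (Gaux 'X n.+1) = ('X - 1) * Gaux 'X n *+ n.+1.
Proof.
elim: n => [|n IH].
  by rewrite GauxS pderiv_G_step /= pderivN pderiv1 oppr0 /G_step deriv0; ring.
rewrite GauxS pderiv_G_step IH G_stepMn [n.+2%:R]mulrSr G_step_mulXsub1 -GauxS.
by rewrite [in RHS]mulrS.
Qed.

(* [Gneg1 n] is beta |-> G_(n+1)(-1, beta). *)
Definition Gneg1 n : {poly R} := (Gaux 'X n).[(-1)%:P].

Lemma deriv_Gneg1 n : (Gneg1 n.+1)^`() = Gneg1 n *- (n.+1).*2.
Proof.
rewrite /Gneg1 -horner_pderivC pderiv_Gaux hornerMn hornerM !hornerE.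
by rewrite polyCN polyC1 -muln2; ring.
Qed.
End BetaDerivative.
Arguments Gneg1 {R} n.

Lemma map_Gaux (A B : comNzRingType) (f : {rmorphism A -> B}) (b : A) n :
  map_poly f (Gaux b n) = Gaux (f b) n.
Proof.
elim: n => [|n IH]; first by rewrite /= rmorphN1.
rewrite !GauxS /G_step -!mul_polyC !(rmorphB, rmorphD, rmorphM) /=.
by rewrite !map_polyC map_polyX /= rmorph1 rmorph_nat -deriv_map IH polyC1.
Qed.

Lemma horner_Gneg1 (R : comNzRingType) (b : R) n : (Gneg1 n).[b] = (Gaux b n).[-1].
Proof.
have := horner_map (horner_eval b) (Gaux 'X n) (-1)%:P.
by rewrite map_Gaux /= !horner_evalE hornerX hornerC => <-.
Qed.

Lemma Gneg1_sym (F : fieldType) n (b : F) :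
  (-1) ^+ n * (Gneg1 n).[1 - b] = (Gneg1 n).[b].
Proof.
by rewrite !horner_Gneg1 -(Gaux_reciprocal b) ?oppr_eq0 ?oner_eq0 // invrN1.
Qed.

Lemma Gaux0_mulX (R : comNzRingType) n : Gaux (0 : R) n.+1 = 'X * Gaux 1 n.+1.
Proof.
elim: n => [|n IH].
  by rewrite !GauxS !G_step_expand /= derivN derivC oppr0 polyC0 polyC1; ring.
by rewrite GauxS IH (GauxS 1 n.+1) !G_step_expand derivM derivX polyC0 polyC1; ring.
Qed.

Section Symmetry.
Variable R : numFieldType.

Lemma Gneg1_odd_root_half n : odd n -> (Gneg1 n).[2^-1 : R] = 0.
Proof.
move=> odd_n; have := Gneg1_sym n (2^-1 : R).
have -> : 1 - 2^-1 = 2^-1 :> R by field.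
rewrite -signr_odd odd_n expr1 mulN1r => /eqP; rewrite eq_sym -addr_eq0 -mulr2n.
by rewrite mulrn_eq0 => /eqP.
Qed.

Lemma Gneg1_even_root0 n : ~~ odd n -> (0 < n)%N -> (Gneg1 n).[0 : R] = 0.
Proof.
case: n => [//|n] even_n _.
have := Gneg1_sym n.+1 (0 : R).
rewrite subr0 -signr_odd (negPf even_n) mul1r !horner_Gneg1.
rewrite Gaux0_mulX hornerM hornerX mulN1r.
by move/eqP; rewrite -addr_eq0 -mulr2n mulrn_eq0 => /eqP ->; rewrite oppr0.
Qed.
End Symmetry.

Section NonnegCoefs.
Variable R : numDomainType.
Implicit Types p q : {poly R}.

Definition nonneg_coefs p := forall i, 0 <= p`_i.

Lemma horner_nonneg_coefs_gt0 p x :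
  nonneg_coefs p -> p != 0 -> 0 < x -> 0 < p.[x].
Proof.
move=> p_ge0 p_neq0 x_gt0.
rewrite horner_coef (polySpred p_neq0) big_ord_recr /=.
apply: ltr_wpDl.
  by apply: sumr_ge0 => i _; rewrite mulr_ge0 ?p_ge0 ?exprn_ge0 ?ltW.
by rewrite mulr_gt0 ?exprn_gt0 // lt_def p_ge0 andbT -lead_coefE lead_coef_eq0.
Qed.

Lemma eq_deriv_horner p q x : p^`() = q^`() -> p.[x] = q.[x] -> p = q.
Proof.
move=> eq_pq' eq_pqx; apply/eqP; rewrite -subr_eq0; apply/eqP.
have deriv_pq0 : (p - q)^`() = 0 by rewrite derivB eq_pq' subrr.
have const_pq : p - q = ((p - q)`_0)%:P.
  apply/polyP => -[|i]; rewrite coefC //=.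
  have /eqP := congr1 (fun s : {poly R} => s`_i) deriv_pq0.
  by rewrite coef_deriv coef0 mulrn_eq0 /= => /eqP.
move/eqP: eq_pqx; rewrite -subr_eq0 -hornerN -hornerD const_pq hornerC.
by move=> /eqP ->; rewrite polyC0.
Qed.
End NonnegCoefs.

(* [Lu Q \Po u] is the derivative of [(2 X - 1) (Q \Po u)] for u = X (1 - X),
   see [deriv_odd_comp_u]. *)
Definition Lu (R : comNzRingType) (q : {poly R}) := q *+ 2 - (1 - 'X *+ 4) * q^`().

Fact Lu_is_linear (R : comNzRingType) : linear (@Lu R).
Proof. by move=> c p q; rewrite /Lu derivD derivZ -!mul_polyC; ring. Qed.

HB.instance Definition _ (R : comNzRingType) :=
  GRing.isLinear.Build R {poly R} {poly R} _ (@Lu R) (@Lu_is_linear R).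

Section LuPreimage.
Variable R : numFieldType.
Implicit Types r : {poly R}.

Lemma Lu_XnS d :
  Lu ('X^(d.+1) : {poly R}) = 'X^(d.+1) *+ (4 * d.+1 + 2)%N - 'X^d *+ d.+1.
Proof. by rewrite /Lu derivXn /= exprS; ring. Qed.

Fixpoint Lu_preimXn d : {poly R} :=
  if d is e.+1 then (4 * d + 2)%N%:R^-1 *: ('X^d + Lu_preimXn e *+ d)
  else (2^-1)%:P.

Lemma Lu_preimXnK d : Lu (Lu_preimXn d) = 'X^d.
Proof.
elim: d => [|d IH] /=.
  by rewrite /Lu derivC mulr0 subr0 expr0 -polyCMn -polyC1; congr _%:P; field.
rewrite linearZ linearD linearMn /= IH Lu_XnS subrK -scaler_nat scalerA mulVf ?scale1r //.
by rewrite pnatr_eq0 addn2.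
Qed.

Lemma nonneg_coefs_Lu_preimXn d : nonneg_coefs (Lu_preimXn d).
Proof.
elim: d => [|d IH] i /=; first by rewrite coefC; case: eqP; rewrite ?invr_ge0 ?ler0n.
rewrite coefZ coefD coefMn coefXn mulr_ge0 ?invr_ge0 ?ler0n //.
by rewrite addr_ge0 ?ler0n ?mulrn_wge0.
Qed.

Lemma Lu_nonneg_coefs_onto r :
  nonneg_coefs r -> exists2 q, nonneg_coefs q & Lu q = r.
Proof.
move=> r_ge0; exists (\sum_(i < size r) r`_i *: Lu_preimXn i).
  move=> j; rewrite coef_sum; apply: sumr_ge0 => i _.
  by rewrite coefZ mulr_ge0 ?r_ge0 ?nonneg_coefs_Lu_preimXn.
rewrite linear_sum -[RHS]coefK poly_def /=.
by apply: eq_bigr => i _; rewrite linearZ /= Lu_preimXnK.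
Qed.

Lemma nonneg_coefs_primitive r :
  nonneg_coefs r -> exists P, [/\ nonneg_coefs P, P^`() = r & P.[0] = 0].
Proof.
move=> r_ge0; exists (\sum_(i < size r) (r`_i / i.+1%:R) *: 'X^(i.+1)); split.
- move=> j; rewrite coef_sum; apply: sumr_ge0 => i _.
  by rewrite coefZ coefXn mulr_ge0 ?divr_ge0 ?r_ge0 ?ler0n.
- rewrite raddf_sum -[RHS]coefK poly_def /=.
  apply: eq_bigr => i _; rewrite derivZ derivXn /= -scaler_nat scalerA.
  by rewrite divfK // pnatr_eq0.
- rewrite horner_sum; apply: big1 => i _.
  by rewrite hornerZ hornerXn expr0n mulr0.
Qed.
End LuPreimage.

Section Shape.
Variable R : numFieldType.
Implicit Types P Q : {poly R}.

Definition u : {poly R} := 'X * (1 - 'X).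

Lemma deriv_u : u^`() = 1 - 'X *+ 2.
Proof. by rewrite /u derivM derivB derivX -polyC1 derivC; ring. Qed.

Lemma deriv_odd_comp_u Q : (('X *+ 2 - 1) * (Q \Po u))^`() = Lu Q \Po u.
Proof.
rewrite derivM deriv_comp deriv_u derivB derivMn derivX -polyC1 derivC /Lu.
rewrite rmorphB rmorphMn !rmorphM rmorphB rmorph1 rmorphMn /= comp_polyX /u.
by ring.
Qed.

Definition Gneg1_even_shape k := exists P,
  [/\ nonneg_coefs P, P != 0 & Gneg1 k.*2 = (-1) ^+ k.+1 *: (P \Po u)].

Definition Gneg1_odd_shape k := exists Q,
  [/\ nonneg_coefs Q, Q != 0 & Gneg1 k.*2.+1 = (-1) ^+ k *: (('X *+ 2 - 1) * (Q \Po u))].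

Lemma Gneg1_even_shape0 : Gneg1_even_shape 0.
Proof.
exists 1; split; [by move=> i; rewrite coef1; case: eqP | exact: oner_neq0 |].
by rewrite /Gneg1 /= hornerN hornerC comp_polyC polyC1 expr1 scaleN1r.
Qed.

Lemma Gneg1_even_odd_shape k : Gneg1_even_shape k -> Gneg1_odd_shape k.
Proof.
case=> P [P_ge0 P_neq0 G_P].
have [Q Q_ge0 LuQ] : exists2 Q, nonneg_coefs Q & Lu Q = P *+ (k.*2.+1).*2.
  by apply: Lu_nonneg_coefs_onto => i; rewrite coefMn mulrn_wge0.
exists Q; split => //.
  apply: contraNneq P_neq0 => Q0; move: LuQ; rewrite Q0 linear0.
  by move/esym/eqP; rewrite -scaler_nat scaler_eq0 pnatr_eq0.
apply: (@eq_deriv_horner _ _ _ 2^-1).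
  rewrite deriv_Gneg1 G_P derivZ deriv_odd_comp_u LuQ.
  by rewrite rmorphMn exprS mulN1r scaleNr mulNrn opprK scalerMnr.
rewrite Gneg1_odd_root_half; last by rewrite /= odd_double.
rewrite hornerZ hornerM hornerD hornerN hornerMn hornerX -polyC1 hornerC.
by rewrite -mulr_natr mulVf ?pnatr_eq0 // subrr mul0r mulr0.
Qed.

Lemma Gneg1_odd_even_shape k : Gneg1_odd_shape k -> Gneg1_even_shape k.+1.
Proof.
case=> Q [Q_ge0 Q_neq0 G_Q].
have [P [P_ge0 P'_Q P0]] :
    exists P, [/\ nonneg_coefs P, P^`() = Q *+ k.+1.*2.*2 & P.[0] = 0].
  by apply: nonneg_coefs_primitive => i; rewrite coefMn mulrn_wge0.
exists P; split => //.
  apply: contraNneq Q_neq0 => P0'; move: P'_Q; rewrite P0' deriv0.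
  by move/esym/eqP; rewrite -scaler_nat scaler_eq0 pnatr_eq0.
apply: (@eq_deriv_horner _ _ _ 0).
  rewrite -[k.+1.*2]/(k.*2.+1).+1 deriv_Gneg1 G_Q derivZ deriv_comp P'_Q deriv_u.
  rewrite rmorphMn doubleS !exprS !mulN1r opprK.
  by move: ((-1) ^+ k) => s; rewrite -!mul_polyC; ring.
rewrite Gneg1_even_root0 ?odd_double // hornerZ horner_comp.
by rewrite /u hornerM hornerX mul0r P0 mulr0.
Qed.

Lemma Gneg1_shape k : Gneg1_even_shape k /\ Gneg1_odd_shape k.
Proof.
suff even_k : Gneg1_even_shape k by split; last exact: Gneg1_even_odd_shape.
elim: k => [|k /Gneg1_even_odd_shape /Gneg1_odd_even_shape //].
exact: Gneg1_even_shape0.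
Qed.
End Shape.
Arguments u {R}.

Section Signs.
Variable R : numFieldType.
Implicit Types b : R.

Lemma mulr2n_lt1 b : (b *+ 2 < 1) = (b < 2^-1).
Proof. by rewrite -[b *+ 2]mulr_natr -ltr_pdivlMr ?ltr0n // mul1r. Qed.

Lemma mulr2n_gt1 b : (1 < b *+ 2) = (2^-1 < b).
Proof. by rewrite -[b *+ 2]mulr_natr -ltr_pdivrMr ?ltr0n // mul1r. Qed.

Lemma horner_u_gt0 b : 0 < b < 1 -> 0 < u.[b].
Proof.
case/andP=> b_gt0 b_lt1.
by rewrite /u hornerM hornerX hornerD hornerN hornerX -polyC1 hornerC mulr_gt0 ?subr_gt0.
Qed.

Lemma Gneg1_even_sign k b : 0 < b < 1 -> 0 < (-1) ^+ k.+1 * (Gneg1 k.*2).[b].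
Proof.
move=> b01; have [[P [P_ge0 P_neq0 ->]] _] := Gneg1_shape R k.
rewrite hornerZ horner_comp mulrA -exprD addnn -signr_odd odd_double mul1r.
exact: horner_nonneg_coefs_gt0 (horner_u_gt0 b01).
Qed.

Lemma Gneg1_odd_sign k b : 0 < b < 1 ->
  exists2 y, 0 < y & (Gneg1 k.*2.+1).[b] = (-1) ^+ k * ((b *+ 2 - 1) * y).
Proof.
move=> b01; have [_ [Q [Q_ge0 Q_neq0 ->]]] := Gneg1_shape R k.
exists (Q \Po u).[b]; first by rewrite horner_comp horner_nonneg_coefs_gt0 ?horner_u_gt0.
by rewrite hornerZ hornerM hornerD hornerN hornerMn hornerX -polyC1 hornerC.
Qed.

Lemma Gneg1_sign_lt_half n b : 0 < b < 2^-1 -> 0 < (-1) ^+ (n./2).+1 * (Gneg1 n).[b].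
Proof.
case/andP=> b_gt0 b_lt_half.
have b01 : 0 < b < 1 by rewrite b_gt0 (lt_trans b_lt_half) // invf_lt1 ?ltr1n.
rewrite -[n]odd_double_half; set k := n./2.
case: (odd n); rewrite /= ?add0n ?add1n ?uphalf_double ?doubleK; last first.
  exact: Gneg1_even_sign.
have [y y_gt0 ->] := Gneg1_odd_sign k b01.
rewrite mulrA -exprD addSn addnn -signr_odd /= odd_double mulN1r oppr_gt0.
by rewrite pmulr_llt0 // subr_lt0 mulr2n_lt1.
Qed.

Lemma Gneg1_sign_gt_half n b : 2^-1 < b < 1 -> 0 < (-1) ^+ (n.+1./2).+1 * (Gneg1 n).[b].
Proof.
case/andP=> b_gt_half b_lt1.
have b01 : 0 < b < 1 by rewrite b_lt1 andbT (lt_trans _ b_gt_half) ?invr_gt0 ?ltr0n.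
rewrite -[n]odd_double_half; set k := n./2.
case: (odd n); rewrite /= ?add0n ?add1n ?uphalf_double ?doubleK; last first.
  exact: Gneg1_even_sign.
have [y y_gt0 ->] := Gneg1_odd_sign k b01.
rewrite mulrA -exprD addSn addSn addnn -signr_odd /= odd_double mul1r.
by rewrite pmulr_lgt0 // subr_gt0 mulr2n_gt1.
Qed.
End Signs.

Lemma odd_half_mod4 n : odd n./2 = (2 <= n %% 4)%N.
Proof. by rewrite -divn2; have := modn2 (n %/ 2); case: (odd _) => /= ?; lia. Qed.

Lemma signr_mul_gt0 (R : numDomainType) e (x : R) :
  0 < (-1) ^+ e.+1 * x -> (~~ odd e -> x < 0) /\ (odd e -> 0 < x).
Proof.
rewrite -signr_odd /=; case: (odd e) => /=.
  by rewrite expr0 mul1r.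
by rewrite expr1 mulN1r oppr_gt0.
Qed.

Section MainClauses.
Variable R : numFieldType.
Implicit Types b : R.

Lemma G_at0_sign m b : (0 < m)%N -> 0 < b ->
  (~~ odd m -> 0 < (G b m).[0]) /\ (odd m -> (G b m).[0] < 0).
Proof.
case: m => // n _ b_gt0; rewrite /G /= horner0_Gaux exprNn -signr_odd.
by case: (odd n); rewrite ?expr1 ?expr0 ?mulN1r ?mul1r ?opprK ?oppr_lt0 exprn_gt0.
Qed.

Lemma G_neg1_sign_lt_half m b : (0 < m)%N -> 0 < b < 2^-1 ->
  ((m %% 4 == 1)%N || (m %% 4 == 2)%N -> (G b m).[-1] < 0) /\
  ((m %% 4 == 0)%N || (m %% 4 == 3)%N -> 0 < (G b m).[-1]).
Proof.
case: m => // n _ /(Gneg1_sign_lt_half n) /signr_mul_gt0.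
rewrite odd_half_mod4 /G /= horner_Gneg1 => -[neg pos].
by split=> /orP[] /eqP m_mod4; [apply: neg | apply: neg | apply: pos | apply: pos]; lia.
Qed.

Lemma G_neg1_sign_gt_half m b : (0 < m)%N -> 2^-1 < b < 1 ->
  ((m %% 4 == 0)%N || (m %% 4 == 1)%N -> (G b m).[-1] < 0) /\
  ((m %% 4 == 2)%N || (m %% 4 == 3)%N -> 0 < (G b m).[-1]).
Proof.
case: m => // n _ /(Gneg1_sign_gt_half n) /signr_mul_gt0.
rewrite odd_half_mod4 /G /= horner_Gneg1 => -[neg pos].
by split=> /orP[] /eqP m_mod4; [apply: neg | apply: neg | apply: pos | apply: pos]; lia.
Qed.
End MainClauses.

Theorem lemma4p6 (R : realFieldType) (m : nat) (hm : (1 <= m)%N) :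
  (forall (beta t : R), t != 0 ->
     t ^+ m.-1 * (G (1 - beta) m).[t^-1] = (G beta m).[t])
  /\ (forall beta : R, 0 < beta ->
        (~~ odd m -> 0 < (G beta m).[0]) /\ (odd m -> (G beta m).[0] < 0))
  /\ (forall beta : R, 0 < beta < 2^-1 ->
        ((m %% 4 == 1)%N || (m %% 4 == 2)%N -> (G beta m).[-1] < 0) /\
        ((m %% 4 == 0)%N || (m %% 4 == 3)%N -> 0 < (G beta m).[-1]))
  /\ (forall beta : R, 2^-1 < beta < 1 ->
        ((m %% 4 == 0)%N || (m %% 4 == 1)%N -> (G beta m).[-1] < 0) /\
        ((m %% 4 == 2)%N || (m %% 4 == 3)%N -> 0 < (G beta m).[-1])).
Proof.
split; first by move=> beta t; exact: Gaux_reciprocal.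
split; first by move=> beta; exact: G_at0_sign.
by split=> beta; [exact: G_neg1_sign_lt_half | exact: G_neg1_sign_gt_half].
Qed.
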